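(* The rules (A1)–(A8) for approximate exclusion atoms are sound: if an approximate exclusion atom $\varphi$ is derivable from a set $\Sigma$ of approximate exclusion atoms using (A1)–(A8), then every team satisfying all atoms of $\Sigma$ satisfies $\varphi$.
   Context: A team $T$ is a finite set of assignments $s:\mathcal{V}\to M$ ($\mathcal{V}$ a set of variables, $M$ a set of values). Letters $x,y,z,u,v,w,\dots$ denote finite tuples of variables; juxtaposition denotes concatenation; $s(x)=\langle s(x_1),\dots,s(x_n)\rangle$. For $|x|=|y|$, $T\models x|y$ iff $s_1(x)\neq s_2(y)$ for all $s_1,s_2\in T$. For a real $0\le p\le 1$, the approximate exclusion atom $x|_p y$ is satisfied, $T\models x|_py$, iff there is $T'\subseteq T$ with $|T'|\le p\cdot|T|$ and $T\setminus T'\models x|y$. The rules (schemata over tuples, atoms well-formed) are: (A1) $x|_px\vdash y|_0z$ for $p<1$; (A2) $x|_py\vdash y|_px$; (A3) $x|_py\vdash xu|_pyv$; (A4) $xuu|_pyvv\vdash xu|_pyv$; (A5) $xyz|_puvw\vdash xzy|_puwv$ where $|x|=|u|$, $|y|=|v|$; (A6) $xw|_pyw\vdash zz|_pxy$; (A7) $x|_qy\vdash x|_py$ for $q\le p\le 1$; (A8) $\vdash x|_1y$. *)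

From Stdlib Require Import Reals List.
Import ListNotations.
Open Scope R_scope.

(* An assignment is a function V -> M; a tuple of variables is a list V and
   s(x) is [map s x]. A team is a finite set of assignments, represented as a
   duplicate-free list (so |T| = length T). *)

Definition assignment (V M : Type) := V -> M.

Record team (V M : Type) := mkTeam {
  tm_list : list (assignment V M);
  tm_nodup : NoDup tm_list }.
Arguments tm_list {V M}.

Record atom (V : Type) := mkAtom { ax : list V; ap : R; ay : list V }.
Arguments mkAtom {V}.
Arguments ax {V}. Arguments ap {V}. Arguments ay {V}.

Definition wf {V : Type} (a : atom V) : Prop :=
  length (ax a) = length (ay a) /\ 0 <= ap a <= 1.

Definition excl {V M : Type} (S : assignment V M -> Prop) (x y : list V) : Prop :=
  forall s1 s2, S s1 -> S s2 -> map s1 x <> map s2 y.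

Definition sat {V M : Type} (T : team V M) (a : atom V) : Prop :=
  exists T' : list (assignment V M),
    NoDup T' /\ incl T' (tm_list T) /\
    INR (length T') <= ap a * INR (length (tm_list T)) /\
    excl (fun s => In s (tm_list T) /\ ~ In s T') (ax a) (ay a).

Inductive ae_derivable {V : Type} (Sig : atom V -> Prop) : atom V -> Prop :=
| d_hyp : forall a, Sig a -> ae_derivable Sig a
| d_A1 : forall x p y z, p < 1 -> wf (mkAtom y 0 z) ->
    ae_derivable Sig (mkAtom x p x) -> ae_derivable Sig (mkAtom y 0 z)
| d_A2 : forall x p y, wf (mkAtom y p x) ->
    ae_derivable Sig (mkAtom x p y) -> ae_derivable Sig (mkAtom y p x)
| d_A3 : forall x p y u v, wf (mkAtom (x ++ u) p (y ++ v)) ->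
    ae_derivable Sig (mkAtom x p y) -> ae_derivable Sig (mkAtom (x ++ u) p (y ++ v))
| d_A4 : forall x u p y v, wf (mkAtom (x ++ u) p (y ++ v)) ->
    ae_derivable Sig (mkAtom (x ++ u ++ u) p (y ++ v ++ v)) ->
    ae_derivable Sig (mkAtom (x ++ u) p (y ++ v))
| d_A5 : forall x y z p u v w, length x = length u -> length y = length v ->
    wf (mkAtom (x ++ z ++ y) p (u ++ w ++ v)) ->
    ae_derivable Sig (mkAtom (x ++ y ++ z) p (u ++ v ++ w)) ->
    ae_derivable Sig (mkAtom (x ++ z ++ y) p (u ++ w ++ v))
| d_A6 : forall x w p y z, wf (mkAtom (z ++ z) p (x ++ y)) ->
    ae_derivable Sig (mkAtom (x ++ w) p (y ++ w)) ->
    ae_derivable Sig (mkAtom (z ++ z) p (x ++ y))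
| d_A7 : forall x q p y, q <= p -> p <= 1 -> wf (mkAtom x p y) ->
    ae_derivable Sig (mkAtom x q y) -> ae_derivable Sig (mkAtom x p y)
| d_A8 : forall x y, wf (mkAtom x 1 y) -> ae_derivable Sig (mkAtom x 1 y).

(* Every rule except (A1) and (A8) keeps the set of removed assignments
   unchanged: if the remaining assignments satisfy the plain exclusion atom of
   the premise, they satisfy that of the conclusion, and (A7) only relaxes the
   size bound. For (A8) remove the whole team. For (A1), no assignment s can
   remain with x|x, since s(x) = s(x); so the whole team is removed, and
   |T| <= p|T| with p < 1 forces the team to be empty, where every atom holds. *)

From Stdlib Require Import Reals List Lra Lia Classical.
Import ListNotations.
Open Scope R_scope.

Lemma app_inj_length {A : Type} (a b c d : list A) :
  length a = length c -> a ++ b = c ++ d -> a = c /\ b = d.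
Proof.
  revert c; induction a as [|h a IH]; intros [|h' c] Hlen Heq;
    simpl in *; try discriminate; auto.
  injection Heq as -> Heq.
  destruct (IH c ltac:(lia) Heq) as [-> ->]; auto.
Qed.

Lemma map_app_inj_length {A B : Type} (f g : A -> B) (x y u v : list A) :
  length x = length y -> map f (x ++ u) = map g (y ++ v) ->
  map f x = map g y /\ map f u = map g v.
Proof.
  intros Hlen; rewrite !map_app.
  apply app_inj_length; rewrite !length_map; exact Hlen.
Qed.

Section Exclusion.

Context {V M : Type} (S : assignment V M -> Prop).

Lemma excl_sym (x y : list V) : excl S x y -> excl S y x.
Proof. intros He s1 s2 H1 H2 E; exact (He s2 s1 H2 H1 (eq_sym E)). Qed.

Lemma excl_app (x y u v : list V) :
  length x = length y -> excl S x y -> excl S (x ++ u) (y ++ v).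
Proof.
  intros Hlen He s1 s2 H1 H2 E.
  apply (map_app_inj_length s1 s2 x y u v Hlen) in E as [E _].
  exact (He s1 s2 H1 H2 E).
Qed.

Lemma excl_app_dup (x y u v : list V) :
  length x = length y ->
  excl S (x ++ u ++ u) (y ++ v ++ v) -> excl S (x ++ u) (y ++ v).
Proof.
  intros Hxy He s1 s2 H1 H2 E.
  apply (map_app_inj_length s1 s2 x y _ _ Hxy) in E as [Ex Eu].
  apply (He s1 s2 H1 H2).
  rewrite !map_app, Ex, Eu; reflexivity.
Qed.

Lemma excl_app_swap (x y z u v w : list V) :
  length x = length u -> length z = length w ->
  excl S (x ++ y ++ z) (u ++ v ++ w) -> excl S (x ++ z ++ y) (u ++ w ++ v).
Proof.
  intros Hxu Hzw He s1 s2 H1 H2 E.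
  apply (map_app_inj_length s1 s2 x u _ _ Hxu) in E as [Ex E].
  apply (map_app_inj_length s1 s2 z w _ _ Hzw) in E as [Ez Ey].
  apply (He s1 s2 H1 H2).
  rewrite !map_app, Ex, Ey, Ez; reflexivity.
Qed.

(* If s1(z) s1(z) = s2(x) s2(y) then s2(x) = s2(y), so s2 alone violates xw|yw. *)
Lemma excl_diag (x y z w : list V) :
  length z = length x -> excl S (x ++ w) (y ++ w) -> excl S (z ++ z) (x ++ y).
Proof.
  intros Hzx He s1 s2 _ H2 E.
  apply (map_app_inj_length s1 s2 z x _ _ Hzx) in E as [Ex Ey].
  apply (He s2 s2 H2 H2).
  rewrite !map_app, <- Ex, <- Ey; reflexivity.
Qed.

End Exclusion.

Section Satisfaction.

Context {V M : Type} (T : team V M).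

Lemma sat_excl_weaken (x y x' y' : list V) (p : R) :
  (forall S : assignment V M -> Prop, excl S x y -> excl S x' y') ->
  sat T (mkAtom x p y) -> sat T (mkAtom x' p y').
Proof.
  intros Hw [T' [Hnd [Hincl [Hsize He]]]].
  exists T'; repeat split; auto.
Qed.

Lemma sat_le (x y : list V) (q p : R) :
  q <= p -> sat T (mkAtom x q y) -> sat T (mkAtom x p y).
Proof.
  intros Hqp [T' [Hnd [Hincl [Hsize He]]]].
  exists T'; repeat split; auto; simpl in *.
  pose proof (pos_INR (length (tm_list T))); nra.
Qed.

Lemma sat_one (x y : list V) : sat T (mkAtom x 1 y).
Proof.
  exists (tm_list T); repeat split.
  - apply tm_nodup.
  - apply incl_refl.
  - simpl; lra.
  - intros s1 s2 [_ []] _; assumption.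
Qed.

Lemma sat_nil (a : atom V) : tm_list T = [] -> sat T a.
Proof.
  intros Hnil; exists []; repeat split.
  - constructor.
  - apply incl_nil_l.
  - rewrite Hnil; simpl; lra.
  - rewrite Hnil; intros s1 s2 [[] _].
Qed.

Lemma sat_refl_lt1_nil (x : list V) (p : R) :
  p < 1 -> sat T (mkAtom x p x) -> tm_list T = [].
Proof.
  intros Hp [T' [_ [_ [Hsize He]]]]; simpl in *.
  assert (Hcover : incl (tm_list T) T').
  { intros s Hs; apply NNPP; intros Hn.
    exact (He s s (conj Hs Hn) (conj Hs Hn) eq_refl). }
  pose proof (le_INR _ _ (NoDup_incl_length (tm_nodup _ _ T) Hcover)) as Hle.
  destruct (tm_list T) as [|s l]; [reflexivity|].
  exfalso; simpl length in *; rewrite S_INR in *.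
  pose proof (pos_INR (length l)); nra.
Qed.

End Satisfaction.

Lemma ae_derivable_wf (V : Type) (Sig : atom V -> Prop) (phi : atom V) :
  (forall a, Sig a -> wf a) -> ae_derivable Sig phi -> wf phi.
Proof. intros HS D; destruct D; auto. Qed.

Theorem lemma3 (V M : Type) (Sig : atom V -> Prop) (phi : atom V) :
  (forall a, Sig a -> wf a) ->
  ae_derivable Sig phi ->
  forall T : team V M, (forall a, Sig a -> sat T a) -> sat T phi.
Proof.
  intros HS D T HT.
  induction D as [a Ha|x p y z Hp _ D IH|x p y _ D IH|x p y u v _ D IH
    |x u p y v [Hw _] D IH|x y z p u v w Hxu Hyv [Hw _] D IH
    |x w p y z [Hw _] D IH|x q p y Hqp _ _ D IH|x y _].
  all: try pose proof (ae_derivable_wf _ _ _ HS D) as [Hpre _].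
  all: simpl in *; rewrite ?length_app in *.
  - auto.
  - exact (sat_nil T _ (sat_refl_lt1_nil T x p Hp IH)).
  - exact (sat_excl_weaken T _ _ _ _ _ (fun S => excl_sym S x y) IH).
  - exact (sat_excl_weaken T _ _ _ _ _ (fun S => excl_app S x y u v Hpre) IH).
  - refine (sat_excl_weaken T _ _ _ _ _
              (fun S => excl_app_dup S x y u v _) IH); lia.
  - refine (sat_excl_weaken T _ _ _ _ _
              (fun S => excl_app_swap S x y z u v w Hxu _) IH); lia.
  - refine (sat_excl_weaken T _ _ _ _ _ (fun S => excl_diag S x y z w _) IH); lia.
  - exact (sat_le T x y q p Hqp IH).
  - apply sat_one.
Qed.
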